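(* If $G$ is a graph with no induced claw $K_{1,3}$, then $\operatorname{reg}(G)\le 2\operatorname{im}(G)$.
   Context: $\operatorname{reg}(G)=\max\{j\ge0:\widetilde H_{j-1}(\operatorname{Ind}(G[S]);\Bbbk)\neq0\text{ for some }S\subseteq V(G)\}$ over a field $\Bbbk$ ($\operatorname{Ind}$ = independence complex). $\operatorname{im}(G)$ is the induced matching number. *)

From HB Require Import structures.
From mathcomp Require Import all_boot all_order all_algebra.
Set Implicit Arguments. Unset Strict Implicit. Unset Printing Implicit Defensive.
Import GRing.Theory.

Definition simple_graph (V : finType) (e : rel V) : Prop :=
  symmetric e /\ irreflexive e.

Definition claw_free (V : finType) (e : rel V) : Prop :=
  ~ exists c x y z : V,
      [&& e c x, e c y, e c z, x != y, x != z, y != z,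
          ~~ e x y, ~~ e x z & ~~ e y z].

Definition induced_matching (V : finType) (e : rel V) (M : {set V * V}) : bool :=
  [forall p in M, e p.1 p.2] &&
  [forall p in M, forall q in M, (p != q) ==>
     [&& p.1 != q.1, p.1 != q.2, p.2 != q.1, p.2 != q.2,
         ~~ e p.1 q.1, ~~ e p.1 q.2, ~~ e p.2 q.1 & ~~ e p.2 q.2]].

Definition im (V : finType) (e : rel V) : nat :=
  \max_(M : {set V * V} | induced_matching e M) #|M|.

(* Faces of Ind(G[S]): independent subsets of S (the empty set included;
   a face with k elements has dimension k-1). *)
Definition ind_face (V : finType) (e : rel V) (S A : {set V}) : bool :=
  (A \subset S) && [forall x in A, forall y in A, ~~ e x y].

(* Chains are row vectors indexed by all subsets of V. *)
Definition nsub (V : finType) : nat := #|{set V}|.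
Definition sub_of (V : finType) (i : 'I_(nsub V)) : {set V} := enum_val i.

(* Boundary matrix from chains on faces with k elements to chains on faces
   with k-1 elements (row-vector convention: c *m bd k), with the usual
   signs w.r.t. the order of V given by enum_rank. For k = 0 this is the zero map; for
   k = 1 it is the augmentation (reduced complex). *)
Definition bd (K : fieldType) (V : finType) (e : rel V) (S : {set V}) (k : nat)
  : 'M[K]_(nsub V, nsub V) :=
  (\matrix_(i, j)
    (if ind_face e S (sub_of i) && (#|sub_of i| == k) then
       \sum_(v in sub_of i)
          ((sub_of j == sub_of i :\ v)%:R *
           (-1) ^+ #|[set u in sub_of i | (enum_rank u < enum_rank v)%N]|)%R
     else 0))%R.

Definition chain_on (K : fieldType) (V : finType) (e : rel V) (S : {set V})
  (k : nat) (c : 'rV[K]_(nsub V)) : Prop :=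
  forall i, ~~ (ind_face e S (sub_of i) && (#|sub_of i| == k)) -> c ord0 i = 0%R.

(* The reduced homology  H~_{j-1}(Ind(G[S]); K)  is nonzero: there is a
   (j-1)-cycle (chain on faces with j elements) that is not a boundary. *)
Definition red_hom_nonzero (K : fieldType) (V : finType) (e : rel V)
  (S : {set V}) (j : nat) : Prop :=
  exists c : 'rV[K]_(nsub V),
    [/\ chain_on e S j c, (c *m bd K e S j = 0)%R & ~~ (c <= bd K e S j.+1)%MS].

From mathcomp Require Import all_boot all_order all_algebra.
From mathcomp Require Import ring.
Set Implicit Arguments. Unset Strict Implicit. Unset Printing Implicit Defensive.
Import GRing.Theory.
Local Open Scope ring_scope.

(* Induction on |S|: Ind(G[S]) has no reduced homology in dimension k-1
   once every induced matching M of G[S] satisfies 2|M| < k.  An isolated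
   vertex makes Ind(G[S]) a cone.  Otherwise take an edge uv; deleting u and
   passing to the link of u (the vertices of S outside N[u]) drops the degree
   by one.  Inside S \ N[u], delete the neighbours w of v one at a time: the
   link of w avoids N[u] and N[w], hence also N[v] by claw-freeness at v, and
   once no neighbour of v is left we are outside N[u] and N[v] as well.  In
   both cases the edge uv can be added to any induced matching, which pays
   for the remaining drop of two degrees. *)

Section Chains.
Variables (R : comNzRingType) (V : finType).
Implicit Types (f g : {set V} -> R) (A B : {set V}) (v x : V).

Definition face_sign v B : R :=
  (-1) ^+ #|[set u in B | (enum_rank u < enum_rank v)%N]|.

(* Chains are functions on all subsets of V; [chain_bd f B] is the coefficient
   of B in the boundary of f, i.e. the entry B of [c *m bd] (see [mulmx_bdE]). *)
Definition chain_bd f B : R := \sum_(v | v \notin B) face_sign v B * f (v |: B).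

Definition chain_cone x f A : R :=
  if x \in A then face_sign x (A :\ x) * f (A :\ x) else 0.

Definition chain_del x f A : R := if x \in A then 0 else f A.

Definition chain_link x f A : R :=
  if x \in A then 0 else face_sign x A * f (x |: A).

Lemma face_sign_sq v B : face_sign v B * face_sign v B = 1.
Proof. by rewrite /face_sign -exprD addnn -mul2n exprM sqrrN !expr1n. Qed.

Lemma face_signU1 v x B : x \notin B ->
  face_sign v (x |: B) = (if (enum_rank x < enum_rank v)%N then -1 else 1) * face_sign v B.
Proof.
move=> xB; rewrite /face_sign.
set L := [set u in B | _].
have -> : [set u in x |: B | (enum_rank u < enum_rank v)%N] =
          if (enum_rank x < enum_rank v)%N then x |: L else L.
  apply/setP => y; case: (eqVneq y x) => [->|yx].
    by case: ifP => h; rewrite !inE ?eqxx ?h ?(negbTE xB) /= ?andbF.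
  by case: ifP => _; rewrite !inE (negbTE yx).
case: ifP => _; last by rewrite mul1r.
by rewrite cardsU1 inE (negbTE xB) exprS.
Qed.

Lemma face_sign_swap v x B : v != x -> x \notin B -> v \notin B ->
  face_sign v (x |: B) * face_sign x (v |: B) = - (face_sign v B * face_sign x B).
Proof.
move=> vx xB vB; rewrite !face_signU1 //.
case: (ltngtP (enum_rank x) (enum_rank v)) => [_|_|/val_inj/enum_rank_inj xv]; try ring.
by rewrite xv eqxx in vx.
Qed.

Lemma eq_chain_bd f g B : (forall A, f A = g A) -> chain_bd f B = chain_bd g B.
Proof. by move=> fg; apply: eq_bigr => v _; rewrite fg. Qed.

Lemma chain_bdD f g B : chain_bd (fun A => f A + g A) B = chain_bd f B + chain_bd g B.
Proof. by rewrite /chain_bd -big_split; apply: eq_bigr => v _; rewrite mulrDr. Qed.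

Lemma chain_bdB f g B : chain_bd (fun A => f A - g A) B = chain_bd f B - chain_bd g B.
Proof. by rewrite /chain_bd -sumrB; apply: eq_bigr => v _; rewrite mulrBr. Qed.

Lemma chain_bd0 B : chain_bd (fun=> 0) B = 0.
Proof. by rewrite /chain_bd big1 // => v _; rewrite mulr0. Qed.

Lemma chain_bd_cone x g B : (forall A, x \in A -> g A = 0) ->
  chain_bd (chain_cone x g) B = g B - chain_cone x (chain_bd g) B.
Proof.
move=> gx0; rewrite /chain_bd /chain_cone.
have [xB|xB] := boolP (x \in B); last first.
  rewrite (bigD1 x) //= setU11 setU1K // mulrA face_sign_sq mul1r subr0.
  rewrite big1 ?addr0 // => v /andP [vB vx].
  by rewrite in_setU1 eq_sym (negbTE vx) (negbTE xB) mulr0.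
have xBx : x \notin B :\ x by rewrite !inE eqxx.
have -> : \sum_(v | v \notin B :\ x) face_sign v (B :\ x) * g (v |: (B :\ x)) =
          \sum_(v | v \notin B) face_sign v (B :\ x) * g (v |: (B :\ x)).
  rewrite (bigD1 x) //= setD1K // gx0 // mulr0 add0r.
  by apply: eq_bigl => v; rewrite !inE; case: (eqVneq v x) => [->|] /=; rewrite ?xB ?andbT.
rewrite gx0 // sub0r mulr_sumr -sumrN; apply: eq_bigr => v vB.
have vx : v != x by apply: contraNneq vB => ->.
have vBx : v \notin B :\ x by rewrite !inE negb_and vB orbT.
have -> : (v |: B) :\ x = v |: (B :\ x).
  apply/setP => y; rewrite !inE; case: (eqVneq y x) => [->|//].
  by rewrite eq_sym (negbTE vx).
rewrite in_setU1 xB orbT -{1}(setD1K xB) mulrA face_sign_swap //; ring.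
Qed.

Lemma chain_decomp x f A : f A = chain_del x f A + chain_cone x (chain_link x f) A.
Proof.
rewrite /chain_del /chain_cone /chain_link.
have [xA|] := boolP (x \in A); last by rewrite addr0.
by rewrite !inE eqxx /= setD1K // mulrA face_sign_sq mul1r add0r.
Qed.

Lemma cycle_del_link x f : (forall B, chain_bd f B = 0) ->
  (forall B, chain_bd (chain_del x f) B = - chain_link x f B) /\
  (forall B, chain_bd (chain_link x f) B = 0).
Proof.
move=> cyc_f.
have E B : chain_bd (chain_del x f) B +
           (chain_link x f B - chain_cone x (chain_bd (chain_link x f)) B) = 0.
  rewrite -chain_bd_cone; last by move=> A xA; rewrite /chain_link xA.
  by rewrite -chain_bdD -(cyc_f B); apply: eq_chain_bd => A; rewrite -chain_decomp.
have del0 B : x \in B -> chain_bd (chain_del x f) B = 0.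
  by move=> xB; rewrite /chain_bd big1 // => v _; rewrite /chain_del in_setU1 xB orbT mulr0.
have cyc_link B : chain_bd (chain_link x f) B = 0.
  have [xB|xB] := boolP (x \in B).
    by rewrite /chain_bd big1 // => v _; rewrite /chain_link in_setU1 xB orbT mulr0.
  move: (E (x |: B)); rewrite del0 ?setU11 // /chain_link /chain_cone setU11 setU1K //.
  rewrite add0r sub0r => /eqP; rewrite oppr_eq0 => /eqP sgD0.
  by rewrite -[LHS]mul1r -(face_sign_sq x B) -mulrA sgD0 mulr0.
split=> // B; have [xB|xB] := boolP (x \in B).
  by rewrite del0 // /chain_link xB oppr0.
by move/eqP: (E B); rewrite /chain_cone (negbTE xB) subr0 addr_eq0 => /eqP.
Qed.

Lemma chain_bdE f B :
  \sum_A f A * \sum_(v in A) ((B == A :\ v)%:R *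
      (-1) ^+ #|[set u in A | (enum_rank u < enum_rank v)%N]|) = chain_bd f B.
Proof.
rewrite /chain_bd.
under eq_bigr => A _ do rewrite big_distrr /= big_mkcond /=.
rewrite exchange_big /= [RHS]big_mkcond /=; apply: eq_bigr => v _.
have [vB|vB] := boolP (v \in B).
  apply: big1 => A _; case: ifP => // vA.
  suff /negbTE-> : B != A :\ v by rewrite mul0r mulr0.
  by apply: contraTneq vB => ->; rewrite !inE eqxx.
rewrite (bigD1 (v |: B)) //= setU11 setU1K // eqxx mul1r big1 ?addr0.
  by rewrite mulrC -/(face_sign v (v |: B)) face_signU1 // ltnn mul1r.
move=> A AvB; case: ifP => // vA.
suff /negbTE-> : B != A :\ v by rewrite mul0r mulr0.
by apply: contraNneq AvB => ->; rewrite setD1K.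
Qed.

End Chains.

Section Faces.
Variables (R : comNzRingType) (V : finType) (e : rel V).
Hypotheses (esym : symmetric e) (eirr : irreflexive e).
Implicit Types (f g : {set V} -> R) (A B S T : {set V}) (x : V) (k : nat).

Definition chain_on_faces S k f := forall A, f A != 0 -> ind_face e S A && (#|A| == k).

(* [k] counts vertices: this is the vanishing of the reduced homology of
   Ind(G[S]) in dimension k-1. *)
Definition hom_vanishes S k := forall f, chain_on_faces S k f ->
  (forall B, chain_bd f B = 0) ->
  exists2 g, chain_on_faces S k.+1 g & forall B, f B = chain_bd g B.

(* The link of x in Ind(G[S]) is Ind(G[ind_link S x]). *)
Definition ind_link S x := [set y in S | (y != x) && ~~ e x y].

Lemma ind_faceP S A :
  reflect (A \subset S /\ {in A &, forall y z, ~~ e y z}) (ind_face e S A).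
Proof.
apply: (iffP andP) => [[AS /forallP h]|[AS h]]; split => //.
  by move=> y z yA zA; move: (h y); rewrite yA => /forallP /(_ z); rewrite zA.
by apply/forallP => y; apply/implyP => yA; apply/forallP => z; apply/implyP; apply: h.
Qed.

Lemma ind_faceS S T A : S \subset T -> ind_face e S A -> ind_face e T A.
Proof. by move=> ST /ind_faceP [AS h]; apply/ind_faceP; split=> //; apply: subset_trans ST. Qed.

Lemma ind_face_setU1 S A x : x \in S -> {in A, forall y, ~~ e x y} ->
  ind_face e S A -> ind_face e S (x |: A).
Proof.
move=> xS hx /ind_faceP [AS h]; apply/ind_faceP; split.
  by rewrite subUset sub1set xS.
move=> y z; rewrite !in_setU1 => /orP [/eqP->|yA] /orP [/eqP->|zA].
- by rewrite eirr.
- exact: hx.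
- by rewrite esym hx.
- exact: h.
Qed.

Lemma ind_link_sub S x : ind_link S x \subset S :\ x.
Proof. by apply/subsetP => y; rewrite !inE => /andP [-> /andP [-> _]]. Qed.

Lemma chain_on_faces_del S k x f :
  chain_on_faces S k f -> chain_on_faces (S :\ x) k (chain_del x f).
Proof.
rewrite /chain_del => fS A; have [|xA] := boolP (x \in A); first by rewrite eqxx.
move=> /fS /andP [/ind_faceP [AS h] ->]; rewrite andbT; apply/ind_faceP; split => //.
by apply/subsetP => y yA; rewrite !inE (subsetP AS) // andbT; apply: contraNneq xA => <-.
Qed.

Lemma chain_on_faces_link S k x f :
  chain_on_faces S k.+1 f -> chain_on_faces (ind_link S x) k (chain_link x f).
Proof.
rewrite /chain_link => fS A; have [|xA] := boolP (x \in A); first by rewrite eqxx.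
have f0 : f (x |: A) = 0 -> face_sign R x A * f (x |: A) = 0 by move->; rewrite mulr0.
move=> /(contra_neq f0) /fS /andP [/ind_faceP [xAS h] xAk].
rewrite cardsU1 xA add1n eqSS in xAk; rewrite xAk andbT.
apply/ind_faceP; split; last by move=> y z yA zA; apply: h; rewrite in_setU1 ?yA ?zA orbT.
apply/subsetP => y yA; rewrite !inE (subsetP xAS) ?in_setU1 ?yA ?orbT //=.
by rewrite (contraNneq _ xA) ?h ?in_setU1 ?yA ?eqxx ?orbT // => <-.
Qed.

Lemma chain_on_faces_cone S T k x g : x \in S -> T \subset S -> {in T, forall y, ~~ e x y} ->
  chain_on_faces T k g -> chain_on_faces S k.+1 (chain_cone x g).
Proof.
move=> xS TS hx gT A; rewrite /chain_cone; case: ifP => [xA|]; last by rewrite eqxx.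
have g0 : g (A :\ x) = 0 -> face_sign R x (A :\ x) * g (A :\ x) = 0 by move->; rewrite mulr0.
move=> /(contra_neq g0) /gT /andP [Ax /eqP Axk].
rewrite -(setD1K xA) cardsU1 !inE eqxx /= Axk eqxx andbT.
apply: ind_face_setU1 (ind_faceS TS Ax) => // y yAx.
by case/ind_faceP: Ax => /subsetP AxT _; apply/hx/AxT.
Qed.

Lemma hom_vanishes_set0 k : (0 < k)%N -> hom_vanishes set0 k.
Proof.
move=> k_gt0 f f0 _; exists (fun=> 0) => [A|B]; first by rewrite eqxx.
rewrite chain_bd0; apply/eqP; apply: contraT => /f0 /andP [/ind_faceP [A0 _]].
by move: A0; rewrite subset0 => /eqP->; rewrite cards0 eq_sym gtn_eqF.
Qed.

Lemma chain_on_facesS S T k f : S \subset T -> chain_on_faces S k f -> chain_on_faces T k f.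
Proof. by move=> ST fS A /fS /andP [/(ind_faceS ST) -> ->]. Qed.

Lemma chain_on_facesD S k f g : chain_on_faces S k f -> chain_on_faces S k g ->
  chain_on_faces S k (fun A => f A + g A).
Proof.
move=> fS gS A; have [f0|/fS //] := eqVneq (f A) 0.
by rewrite f0 add0r => /gS.
Qed.

Lemma chain_on_facesN S k f : chain_on_faces S k f -> chain_on_faces S k (fun A => - f A).
Proof. by move=> fS A; rewrite oppr_eq0; apply: fS. Qed.

Lemma hom_vanishes_isolated S k x : x \in S -> {in S, forall y, ~~ e x y} -> hom_vanishes S k.
Proof.
move=> xS hx f fS cyc_f; have [del_bd _] := cycle_del_link x cyc_f.
exists (chain_cone x (chain_del x f)) => [|B].
  apply: chain_on_faces_cone (chain_on_faces_del (x := x) fS) => //; first exact: subsetDl.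
  by move=> y /setD1P [_ /hx].
rewrite chain_bd_cone; last by move=> A xA; rewrite /chain_del xA.
have -> : chain_cone x (chain_bd (chain_del x f)) B = - chain_cone x (chain_link x f) B.
  by rewrite /chain_cone; case: ifP; rewrite ?oppr0 // del_bd mulrN.
by rewrite opprK -chain_decomp.
Qed.

Lemma hom_vanishes_del_link S k x : x \in S ->
  hom_vanishes (S :\ x) k.+1 -> hom_vanishes (ind_link S x) k -> hom_vanishes S k.+1.
Proof.
move=> xS hom_del hom_link f fS cyc_f.
have [del_bd link_cyc] := cycle_del_link x cyc_f.
have linkS := ind_link_sub S x.
have [g gL link_bd] := hom_link _ (chain_on_faces_link (x := x) fS) link_cyc.
pose c A := chain_del x f A + g A.
have cS : chain_on_faces (S :\ x) k.+1 c.
  exact: chain_on_facesD (chain_on_faces_del (x := x) fS) (chain_on_facesS linkS gL).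
have cyc_c B : chain_bd c B = 0 by rewrite chain_bdD del_bd -link_bd addNr.
have [h hS c_bd] := hom_del c cS cyc_c.
have gx0 A : x \in A -> g A = 0.
  move=> xA; apply: contraTeq xA => /gL /andP [/ind_faceP [/subsetP AL _] _].
  by apply/negP => /AL; rewrite !inE eqxx andbF.
exists (fun A => h A - chain_cone x g A) => [|B].
  apply: chain_on_facesD (chain_on_facesS (subsetDl S _) hS) (chain_on_facesN _).
  apply: chain_on_faces_cone gL => //; first exact: subset_trans linkS (subsetDl S _).
  by move=> y; rewrite !inE => /andP [_ /andP [_ ->]].
rewrite chain_bdB -c_bd chain_bd_cone // /c (chain_decomp x f B).
have -> : chain_cone x (chain_bd g) B = chain_cone x (chain_link x f) B.
  by rewrite /chain_cone link_bd.
ring.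
Qed.

End Faces.

Section InducedMatchings.
Variables (V : finType) (e : rel V).
Implicit Types (S T : {set V}) (M : {set V * V}) (k : nat).

Definition twice_im_lt S k := forall M, induced_matching e M ->
  {in M, forall p, (p.1 \in S) && (p.2 \in S)} -> (2 * #|M| < k)%N.

Lemma induced_matchingP M : reflect
  ({in M, forall p, e p.1 p.2} /\
   {in M &, forall p q, p != q ->
     [&& p.1 != q.1, p.1 != q.2, p.2 != q.1, p.2 != q.2,
         ~~ e p.1 q.1, ~~ e p.1 q.2, ~~ e p.2 q.1 & ~~ e p.2 q.2]})
  (induced_matching e M).
Proof.
apply: (iffP andP) => [[/forallP h1 /forallP h2]|[h1 h2]]; split.
- by move=> p pM; move/implyP: (h1 p); apply.
- move=> p q pM qM; move/implyP: (h2 p) => /(_ pM) /forallP /(_ q) /implyP /(_ qM).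
  exact/implyP.
- by apply/forallP => p; apply/implyP; apply: h1.
- apply/forallP => p; apply/implyP => pM; apply/forallP => q; apply/implyP => qM.
  by apply/implyP; apply: h2.
Qed.

Lemma twice_im_ltS S T k k' : T \subset S -> (k <= k')%N -> twice_im_lt S k -> twice_im_lt T k'.
Proof.
move=> TS kk' imS M iM MT; apply: leq_trans kk'; apply: imS => // p /MT /andP [h1 h2].
by rewrite !(subsetP TS).
Qed.

Lemma twice_im_lt_edge S T u v k : symmetric e -> u \in S -> v \in S -> e u v ->
  {in T, forall y, [&& y \in S, y != u, y != v, ~~ e u y & ~~ e v y]} ->
  twice_im_lt S k.+2 -> twice_im_lt T k.
Proof.
move=> esym uS vS euv hT imS M iM MT.
have uvM : (u, v) \notin M by apply/negP => /MT /andP [/hT /and5P [_ /eqP]].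
have := imS ((u, v) |: M); rewrite cardsU1 uvM add1n mulnS !ltnS; apply.
  case/induced_matchingP: iM => h1 h2; apply/induced_matchingP; split.
    by move=> p; rewrite in_setU1 => /orP [/eqP-> //|]; apply: h1.
  move=> p q; rewrite !in_setU1 => /orP [/eqP->|pM] /orP [/eqP->|qM] //=.
  - by rewrite eqxx.
  - move=> _; case/andP: (MT q qM) => /hT /and5P [_ a1 a2 a3 a4] /hT /and5P [_ b1 b2 b3 b4].
    by rewrite !(eq_sym u) !(eq_sym v) a1 a2 a3 a4 b1 b2 b3 b4.
  - move=> _; case/andP: (MT p pM) => /hT /and5P [_ a1 a2 a3 a4] /hT /and5P [_ b1 b2 b3 b4].
    by rewrite !(esym _ u) !(esym _ v) a1 a2 a3 a4 b1 b2 b3 b4.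
  - exact: h2.
move=> p; rewrite in_setU1 => /orP [/eqP-> /=|]; first by rewrite uS vS.
by move=> /MT /andP [/hT /and5P [-> _ _ _ _] /hT /and5P [-> _ _ _ _]].
Qed.

End InducedMatchings.

Section ClawFree.
Variables (R : comNzRingType) (V : finType) (e : rel V).
Hypotheses (esym : symmetric e) (eirr : irreflexive e) (claw : claw_free e).

Section Edge.
Variables (S : {set V}) (u v : V) (k : nat).
Hypotheses (uS : u \in S) (vS : v \in S) (euv : e u v) (imS : twice_im_lt e S k.+3).
Hypothesis IH : forall T : {set V}, (#|T| < #|S|)%N ->
  forall k', twice_im_lt e T k' -> hom_vanishes R e T k'.

Lemma mem_ind_link_edge y : y \in ind_link e S u -> [&& y \in S, y != u, y != v & ~~ e u y].
Proof.
rewrite !inE => /andP [-> /andP [-> euy]]; rewrite euy andbT /=.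
by apply: contraNneq euy => ->.
Qed.

Lemma ind_link_lt (T : {set V}) : T \subset ind_link e S u -> (#|T| < #|S|)%N.
Proof.
move=> TL; apply: (@leq_ltn_trans #|S :\ u|); last by rewrite (cardsD1 u S) uS.
exact/subset_leq_card/(subset_trans TL)/ind_link_sub.
Qed.

Lemma claw_free_ind_link w y : w \in ind_link e S u -> y \in ind_link e S u ->
  e v w -> y != w -> ~~ e w y -> ~~ e v y.
Proof.
move=> /mem_ind_link_edge /and4P [_ wu _ euw] /mem_ind_link_edge /and4P [_ yu _ euy].
move=> evw yw ewy; apply/negP => evy; apply: claw; exists v, u, w, y.
by rewrite (esym v u) euv evw evy (eq_sym u w) wu (eq_sym u y) yu (eq_sym w y) yw euw euy ewy.
Qed.

Lemma hom_vanishes_sub_ind_link (T : {set V}) : T \subset ind_link e S u -> hom_vanishes R e T k.+2.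
Proof.
have [n] := ubnP #|T|; elim: n T => // n IHn T ltTn TL.
have TS y : y \in T -> [&& y \in S, y != u, y != v & ~~ e u y].
  by move=> yT; apply/mem_ind_link_edge/(subsetP TL).
have [/exists_inP [w wT evw]|/exists_inPn nbr_v] := boolP [exists w in T, e v w].
  apply: (hom_vanishes_del_link esym eirr wT).
    apply: IHn; last exact: subset_trans (subsetDl T _) TL.
    by move: ltTn; rewrite (cardsD1 w T) wT.
  have linkT : ind_link e T w \subset T := subset_trans (ind_link_sub e T w) (subsetDl T _).
  apply: IH; first exact/ind_link_lt/(subset_trans linkT).
  apply: (twice_im_lt_edge esym uS vS euv) imS => y yL.
  have yT := subsetP linkT y yL.
  case/and4P: (TS y yT) => -> -> -> -> /=.
  move: yL; rewrite inE => /andP [_ /andP [yw ewy]].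
  exact: (claw_free_ind_link (subsetP TL w wT) (subsetP TL y yT)).
apply: (IH (ind_link_lt TL)); apply: (twice_im_ltS (subxx T) (leqnSn _)).
apply: (twice_im_lt_edge esym uS vS euv) imS => y yT.
by case/and4P: (TS y yT) => -> -> -> -> /=; rewrite nbr_v.
Qed.

Lemma hom_vanishes_edge : hom_vanishes R e S k.+3.
Proof.
apply: (hom_vanishes_del_link esym eirr uS); last exact: hom_vanishes_sub_ind_link.
apply: IH; first by rewrite (cardsD1 u S) uS.
exact: twice_im_ltS (subsetDl S _) (leqnn _) imS.
Qed.

End Edge.

Lemma hom_vanishes_twice_im_lt (S : {set V}) k : twice_im_lt e S k -> hom_vanishes R e S k.
Proof.
have [n] := ubnP #|S|; elim: n S k => // n IHn S k ltSn imS.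
have IH (T : {set V}) : (#|T| < #|S|)%N -> forall k', twice_im_lt e T k' -> hom_vanishes R e T k'.
  by move=> ltTS k'; apply: IHn; apply: leq_trans ltTS _.
have [/exists_inP [x xS /forall_inP isolated]|] := boolP [exists x in S, [forall y in S, ~~ e x y]].
  exact: (hom_vanishes_isolated esym eirr xS isolated).
move=> /exists_inPn no_isolated.
have [S0|[u uS]] := set_0Vmem S.
  rewrite S0; apply: hom_vanishes_set0.
  have := imS set0; rewrite cards0; apply=> [|p]; last by rewrite inE.
  by apply/induced_matchingP; split=> p; rewrite inE.
have [v vS euv] : exists2 v, v \in S & e u v.
  by have /forall_inPn [v vS] := no_isolated u uS; rewrite negbK; exists v.
have k_gt2 : (2 < k)%N.
  have := imS [set (u, v)]; rewrite cards1; apply.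
    apply/induced_matchingP; split=> [p|p q]; rewrite ?inE => /eqP-> //.
    by move=> /eqP->; rewrite eqxx.
  by move=> p; rewrite inE => /eqP->; rewrite /= uS vS.
case: k k_gt2 imS => [|[|[|k]]] // _ imS.
exact: hom_vanishes_edge uS vS euv imS IH.
Qed.

End ClawFree.

Section ReducedHomology.
Variables (K : fieldType) (V : finType) (e : rel V).

Lemma mulmx_bdE (S : {set V}) k (c : 'rV[K]_(nsub V)) (f : {set V} -> K) i :
  (forall A, c ord0 (enum_rank A) = f A) -> chain_on_faces e S k f ->
  (c *m bd K e S k) ord0 i = chain_bd f (sub_of i).
Proof.
move=> cf fS; rewrite mxE -chain_bdE.
rewrite (reindex (@enum_rank _)) /=; last exact: onW_bij (enum_rank_bij _).
apply: eq_bigr => A _; rewrite cf mxE /sub_of enum_rankK.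
case: ifP => // notface; have [->|/fS] := eqVneq (f A) 0; first by rewrite !mul0r.
by rewrite notface.
Qed.

Lemma red_hom_zero (S : {set V}) j : hom_vanishes K e S j -> ~ red_hom_nonzero K e S j.
Proof.
move=> homS [c [cS cyc_c not_bd]].
pose f A := c ord0 (enum_rank A).
have fS : chain_on_faces e S j f.
  by move=> A; apply: contraR => notface; apply/eqP/cS; rewrite /sub_of enum_rankK.
have cyc_f B : chain_bd f B = 0.
  by rewrite -[B]enum_rankK -(mulmx_bdE (enum_rank B) (fun=> erefl) fS) cyc_c mxE.
have [g gS f_bd] := homS f fS cyc_f.
move/negP: not_bd; apply; apply/submxP; exists (\row_i g (sub_of i)).
apply/rowP => i; rewrite (mulmx_bdE _ _ gS) => [|A]; last by rewrite mxE /sub_of enum_rankK.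
by rewrite -f_bd /f /sub_of enum_valK.
Qed.

End ReducedHomology.

Theorem mainTheorem9 (K : fieldType) (V : finType) (e : rel V) :
  simple_graph e -> claw_free e ->
  forall (S : {set V}) (j : nat), red_hom_nonzero K e S j -> (j <= 2 * im e)%N.
Proof.
move=> [esym eirr] claw S j hom_nz; rewrite leqNgt; apply/negP => lt_im_j.
apply: (red_hom_zero (hom_vanishes_twice_im_lt esym eirr claw _)) hom_nz.
move=> M iM _; apply: leq_ltn_trans lt_im_j.
by rewrite leq_mul2l leq_bigmax_cond ?orbT.
Qed.
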